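(* Let $\mathcal{U},\mathcal{X}$ be Banach spaces with either $\mathcal{X}=\mathcal{U}^*$ or $\mathcal{U}=\mathcal{X}^*$ (duality pairing $\langle\cdot,\cdot\rangle_{\mathcal{U},\mathcal{X}}$), $\mathcal{W},\mathcal{Y}$ reflexive Banach spaces, $\mathcal{G}$ a Hilbert space, $g^\delta\in\mathcal{G}$, $\alpha>0$, $A\in L(\mathcal{Y},\mathcal{W}^* )$ continuously invertible, $B\in L(\mathcal{U},\mathcal{W}^* )$ admitting $B^*\in L(\mathcal{W},\mathcal{X})$ with $\langle Bu,w\rangle_{\mathcal{W}^*,\mathcal{W}}=\langle u,B^*w\rangle_{\mathcal{U},\mathcal{X}}$ for all $u\in\mathcal{U}$, $w\in\mathcal{W}$, and $C\in L(\mathcal{Y},\mathcal{G})$. Let $\mathcal{R}_\alpha$ be the indicator function of the closed ball $B^\mathcal{U}_{1/\alpha}=\{u\in\mathcal{U}:\|u\|_\mathcal{U}\le1/\alpha\}$ and $J_\alpha(u,y)=\frac12\|Cy-g^\delta\|_\mathcal{G}^2+\mathcal{R}_\alpha(u)$. Let $\mathcal{U}_h\subset\mathcal{U}$, $\mathcal{Y}_h\subset\mathcal{Y}$, $\mathcal{W}_h\subset\mathcal{W}$ be finite-dimensional subspaces. Let $(\bar u,\bar y)$ minimize $J_\alpha$ over $\mathcal{U}\times\mathcal{Y}$ subject to $Ay=Bu$, and let $(\bar u_h,\bar y_h)$ minimize $J_\alpha$ over $\mathcal{U}_h\times\mathcal{Y}_h$ subject to $\langle Ay-Bu,w_h\rangle_{\mathcal{W}^*,\mathcal{W}}=0$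 for all $w_h\in\mathcal{W}_h$. Let $\hat w\in\mathcal{W}$ be the solution of $C^*(C\bar y_h-g^\delta)+A^*\hat w=0$ and $\rho_y:=A\bar y_h-B\bar u_h$. Then $$\|C\bar y_h-C\bar y\|_\mathcal{G}^2\le\frac4\alpha\|B^*\hat w\|_\mathcal{X}-4\langle\bar u_h,B^*\hat w\rangle_{\mathcal{U},\mathcal{X}}+4\|CA^{-1}\rho_y\|_\mathcal{G}^2,$$ $$J_\alpha(\bar u_h,\bar y_h)-J_\alpha(\bar u,\bar y)\le\frac1\alpha\|B^*\hat w\|_\mathcal{X}-\langle\bar u_h,B^*\hat w\rangle_{\mathcal{U},\mathcal{X}}+\|CA^{-1}\rho_y\|_\mathcal{G}\,\|C\bar y_h-g^\delta\|_\mathcal{G}.$$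
   Context: $A^*\in L(\mathcal{W},\mathcal{Y}^* )$ and $C^*\in L(\mathcal{G},\mathcal{Y}^* )$ denote the adjoints defined by $\langle Ay,w\rangle_{\mathcal{W}^*,\mathcal{W}}=\langle y,A^*w\rangle_{\mathcal{Y},\mathcal{Y}^*}$ and $(Cy,g)_\mathcal{G}=\langle y,C^*g\rangle_{\mathcal{Y},\mathcal{Y}^*}$. *)

From HB Require Import structures.
From mathcomp Require Import all_boot all_order all_algebra.
From mathcomp Require Import all_classical all_reals all_analysis.
Set Implicit Arguments. Unset Strict Implicit. Unset Printing Implicit Defensive.
Import Order.TTheory GRing.Theory Num.Theory.
Import numFieldNormedType.Exports.
Local Open Scope classical_set_scope.
Local Open Scope ring_scope.

Section Defs.
Variable R : realType.

Definition bounded_linear (E F : normedModType R) (f : E -> F) : Prop :=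
  (forall (a : R) (x y : E), f (a *: x + y) = a *: f x + f y) /\ continuous f.

Definition cont_lin_functional (E : normedModType R) (f : E -> R) : Prop :=
  (forall (a : R) (x y : E), f (a *: x + y) = a * f x + f y) /\ continuous f.

(* F is (isometrically identified with) the dual space E^* through the
   pairing p : E -> F -> R, i.e.  p x y = <x, y>_{E,E^*}:
   p is bilinear, each p . y is a continuous linear functional on E with
   operator norm ||y||_F, and every continuous linear functional on E is
   represented by a unique y. *)
Definition is_dual_pairing (E F : normedModType R) (p : E -> F -> R) : Prop :=
  [/\ (forall y : F, cont_lin_functional (fun x => p x y)),
      (forall (x : E) (a : R) (y1 y2 : F), p x (a *: y1 + y2) = a * p x y1 + p x y2),
      (forall y : F, `|y| = sup [set r | exists x : E, `|x| <= 1 /\ r = p x y]) &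
      (forall f : E -> R, cont_lin_functional f ->
         exists! y : F, forall x : E, f x = p x y)].

(* E is reflexive, given its dual F (via the dual pairing p): every continuous
   linear functional on E^* = F is evaluation at some element of E. *)
Definition reflexive_via (E F : normedModType R) (p : E -> F -> R) : Prop :=
  forall phi : F -> R, cont_lin_functional phi ->
    exists x : E, forall y : F, phi y = p x y.

(* ip is an inner product on G inducing the norm of G (so a complete G is a
   Hilbert space). *)
Definition inner_product_of (G : normedModType R) (ip : G -> G -> R) : Prop :=
  [/\ (forall x y : G, ip x y = ip y x),
      (forall (a : R) (x y z : G), ip (a *: x + y) z = a * ip x z + ip y z) &
      (forall x : G, ip x x = `|x| ^+ 2)].

Definition fin_dim_subspace (V : lmodType R) (S : set V) : Prop :=
  exists (n : nat) (b : 'I_n -> V),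
    S = [set v | exists c : 'I_n -> R, v = \sum_(i < n) c i *: b i].

Definition Ralpha (U : normedModType R) (alpha : R) (u : U) : \bar R :=
  if `|u| <= alpha^-1 then 0%E else +oo%E.

Definition Jalpha (U Y G : normedModType R) (C : Y -> G) (g : G) (alpha : R)
    (u : U) (y : Y) : \bar R :=
  ((2^-1 * `|C y - g| ^+ 2)%:E + Ralpha alpha u)%E.

End Defs.

From HB Require Import structures.
From mathcomp Require Import all_boot all_order all_algebra.
From mathcomp Require Import all_classical all_reals all_analysis.
From mathcomp Require Import lra.
Import Order.TTheory GRing.Theory Num.Theory.
Import numFieldNormedType.Exports.
Local Open Scope classical_set_scope.
Local Open Scope ring_scope.

(* Write [e := C ybar_h - g], [z := C ybar_h - C ybar] and [r := C A^-1 rho_y].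
   Since [A^* what = - C^* e], adjointness gives [(C y, e) = - <A y, what>], hence
   [(z, e) = (r, e) + <ubar - ubar_h, B^* what>].  The pair
   [(ubar_h, A^-1 B ubar_h)] is feasible for the continuous problem, with
   [C A^-1 B ubar_h - g = e - r], so optimality of [(ubar, ybar)] reads
   [|e - z| <= |e - r|].  Expanding both squares and bounding
   [<ubar, B^* what> <= |B^* what| / alpha] (both controls lie in the ball)
   gives the two estimates; the second also uses Cauchy-Schwarz on [(r, e)]. *)

Set Implicit Arguments.
Unset Strict Implicit.

Section LinearMaps.
Variable R : realType.

Lemma lin_fnB (V W : lmodType R) (f : V -> W) :
  (forall (a : R) x y, f (a *: x + y) = a *: f x + f y) -> {morph f : x y / x - y}.
Proof. by move=> lin x y; rewrite addrC -scaleN1r lin scaleN1r addrC. Qed.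

Lemma lin_fn0 (V W : lmodType R) (f : V -> W) :
  (forall (a : R) x y, f (a *: x + y) = a *: f x + f y) -> f 0 = 0.
Proof. by move=> lin; rewrite -(subrr 0) (lin_fnB lin) subrr. Qed.

Lemma dual_pairing_le_norm (E F : normedModType R) (p : E -> F -> R) :
  is_dual_pairing p -> forall x y, p x y <= `|x| * `|y|.
Proof.
case=> lin_l lin_r norm_sup _ x y.
have [lin_x _] := lin_l y.
set S := [set r | exists x : E, `|x| <= 1 /\ r = p x y].
have S0 : S 0 by exists 0; rewrite normr0 (lin_fn0 lin_x).
have supS : has_sup S.
  split; first by exists 0.
  (* an unbounded [S] has [sup S = 0], which forces [y = 0] and hence [S = [set 0]] *)
  have [//|unbounded] := pselect (has_ubound S).
  have y0 : y = 0 by apply/normr0_eq0; rewrite norm_sup sup_out // => -[].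
  by exists 0 => _ [x' [_ ->]]; rewrite y0 (lin_fn0 (lin_r x')).
have [->|x_neq0] := eqVneq x 0; first by rewrite (lin_fn0 lin_x) normr0 mul0r.
have x_gt0 : 0 < `|x| by rewrite normr_gt0.
have x_rescaled : x = `|x| *: (`|x|^-1 *: x) + 0.
  by rewrite addr0 scalerA divff ?gt_eqF // scale1r.
rewrite {1}x_rescaled lin_x (lin_fn0 lin_x) addr0 norm_sup.
apply: ler_wpM2l; first exact: ltW.
apply: sup_upper_bound => //; exists (`|x|^-1 *: x); split => //.
by rewrite normrZ normfV normr_id mulVf ?gt_eqF.
Qed.

Lemma dual_pairing_le_norm_either (E F : normedModType R) (p : E -> F -> R) :
  is_dual_pairing p \/ is_dual_pairing (fun y x => p x y) ->
  forall x y, p x y <= `|x| * `|y|.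
Proof.
case=> /dual_pairing_le_norm le x y; first exact: le.
by rewrite mulrC; apply: le.
Qed.

Lemma fin_dim_subspace0 (V : lmodType R) (S : set V) : fin_dim_subspace S -> S 0.
Proof. by case=> n [b ->]; exists (fun=> 0); rewrite big1 // => i _; rewrite scale0r. Qed.

End LinearMaps.

Section InnerProduct.
Variables (R : realType) (G : normedModType R) (ip : G -> G -> R).
Hypothesis ip_inner : inner_product_of ip.

Lemma ipC x y : ip x y = ip y x.
Proof. by case: ip_inner. Qed.

Lemma ip_lin_l z : forall (a : R) x y, ip (a *: x + y) z = a *: ip x z + ip y z.
Proof. by case: ip_inner. Qed.

Lemma ip_norm x : ip x x = `|x| ^+ 2.
Proof. by case: ip_inner. Qed.

Lemma normB_sqr x y : `|x - y| ^+ 2 = `|x| ^+ 2 - 2 * ip x y + `|y| ^+ 2.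
Proof.
rewrite -!ip_norm !(lin_fnB (ip_lin_l _)) (ipC x) (ipC y (x - y)).
by rewrite !(lin_fnB (ip_lin_l _)) (ipC y x); lra.
Qed.

Lemma ip_le_norm x y : ip x y <= `|x| * `|y|.
Proof.
have ipZl a u v : ip (a *: u) v = a * ip u v.
  by rewrite -[a *: u]addr0 ip_lin_l (lin_fn0 (ip_lin_l v)) addr0.
have ip0l v : ip 0 v = 0 := lin_fn0 (ip_lin_l v).
have [->|y_neq0] := eqVneq y 0; first by rewrite ipC ip0l normr0 mulr0.
have [->|x_neq0] := eqVneq x 0; first by rewrite ip0l normr0 mul0r.
have y_gt0 : 0 < `|y| by rewrite normr_gt0.
have x_gt0 : 0 < `|x| by rewrite normr_gt0.
have := sqr_ge0 `| `|y| *: x - `|x| *: y|.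
rewrite normB_sqr ipZl (ipC x) ipZl (ipC y x) !normrZ.
rewrite (ger0_norm (ltW y_gt0)) (ger0_norm (ltW x_gt0)).
have := mulr_gt0 y_gt0 x_gt0; nra.
Qed.

Lemma closer_point_bounds e z r (d : R) :
  `|e - z| ^+ 2 <= `|e - r| ^+ 2 -> ip z e = ip r e + d ->
  `|z| ^+ 2 <= `|r| ^+ 2 + 2 * d /\
  2^-1 * `|e| ^+ 2 - 2^-1 * `|e - z| ^+ 2 <= `|r| * `|e| + d.
Proof.
rewrite !normB_sqr (ipC e z) (ipC e r) => closer ip_ze.
have := ip_le_norm r e; have := sqr_ge0 `|z|; split; nra.
Qed.

End InnerProduct.

Section Objective.
Variables (R : realType) (U Y G : normedModType R).
Variables (C : Y -> G) (g : G) (alpha : R).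

Lemma Jalpha_in_ball (u : U) y : `|u| <= alpha^-1 ->
  Jalpha C g alpha u y = (2^-1 * `|C y - g| ^+ 2)%:E.
Proof. by move=> u_ball; rewrite /Jalpha /Ralpha u_ball adde0. Qed.

Lemma Jalpha_le_ball (u u' : U) y y' :
  (Jalpha C g alpha u y <= Jalpha C g alpha u' y')%E ->
  `|u'| <= alpha^-1 -> `|u| <= alpha^-1.
Proof.
move=> + /(Jalpha_in_ball y') Ju'; rewrite Ju' /Jalpha /Ralpha.
by case: ifP.
Qed.

End Objective.

Theorem proposition4p1 (R : realType)
  (U X W Wd Y Yd G : completeNormedModType R)
  (pUX : U -> X -> R) (pW : W -> Wd -> R) (pY : Y -> Yd -> R) (ip : G -> G -> R)
  (hUX : is_dual_pairing pUX \/ is_dual_pairing (fun (x : X) (u : U) => pUX u x))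
  (hW : is_dual_pairing pW) (hWrefl : reflexive_via pW)
  (hY : is_dual_pairing pY) (hYrefl : reflexive_via pY)
  (hG : inner_product_of ip)
  (gd : G) (alpha : R) (halpha : 0 < alpha)
  (A : Y -> Wd) (Ainv : Wd -> Y) (B : U -> Wd) (Bs : W -> X) (C : Y -> G)
  (As : W -> Yd) (Cs : G -> Yd)
  (hA : bounded_linear A) (hAinv : bounded_linear Ainv)
  (hAinvl : forall y, Ainv (A y) = y) (hAinvr : forall f, A (Ainv f) = f)
  (hB : bounded_linear B) (hBs : bounded_linear Bs)
  (hBadj : forall (u : U) (w : W), pW w (B u) = pUX u (Bs w))
  (hC : bounded_linear C)
  (hAs : bounded_linear As) (hAadj : forall (y : Y) (w : W), pW w (A y) = pY y (As w))
  (hCs : bounded_linear Cs) (hCadj : forall (y : Y) (g : G), ip (C y) g = pY y (Cs g))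
  (Uh : set U) (Yh : set Y) (Wh : set W)
  (hUh : fin_dim_subspace Uh) (hYh : fin_dim_subspace Yh) (hWh : fin_dim_subspace Wh)
  (ubar : U) (ybar : Y)
  (hcont_feas : A ybar = B ubar)
  (hcont_min : forall (u : U) (y : Y), A y = B u ->
      (Jalpha C gd alpha ubar ybar <= Jalpha C gd alpha u y)%E)
  (ubarh : U) (ybarh : Y)
  (hubarh : Uh ubarh) (hybarh : Yh ybarh)
  (hdisc_feas : forall wh : W, Wh wh -> pW wh (A ybarh - B ubarh) = 0)
  (hdisc_min : forall (u : U) (y : Y), Uh u -> Yh y ->
      (forall wh : W, Wh wh -> pW wh (A y - B u) = 0) ->
      (Jalpha C gd alpha ubarh ybarh <= Jalpha C gd alpha u y)%E)
  (what : W) (hwhat : Cs (C ybarh - gd) + As what = 0) :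
  let rhoy := A ybarh - B ubarh in
  `|C ybarh - C ybar| ^+ 2 <=
     4 / alpha * `|Bs what| - 4 * pUX ubarh (Bs what) + 4 * `|C (Ainv rhoy)| ^+ 2
  /\
  (Jalpha C gd alpha ubarh ybarh - Jalpha C gd alpha ubar ybar <=
     (alpha^-1 * `|Bs what| - pUX ubarh (Bs what)
      + `|C (Ainv rhoy)| * `|C ybarh - gd|)%:E)%E.
Proof.
move=> rho; case: hA hAinv hB hC => linA _ [linAinv _] [linB _] [linC _].
case: hW hY => _ linW _ _ [_ linY _ _].
set e := C ybarh - gd; set r := C (Ainv rho); set z := C ybarh - C ybar.
have ip_Ce y : ip (C y) e = - pW what (A y).
  have Cs_e : Cs e = - As what by apply/eqP; rewrite -addr_eq0 hwhat.
  by rewrite hCadj hAadj Cs_e -sub0r (lin_fnB (linY y)) (lin_fn0 (linY y)) sub0r.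
have feas0 : A 0 = B 0 by rewrite (lin_fn0 linA) (lin_fn0 linB).
have ball0 : `|0 : U| <= alpha^-1 by rewrite normr0 invr_ge0 ltW.
have ubar_ball : `|ubar| <= alpha^-1 := Jalpha_le_ball (hcont_min 0 0 feas0) ball0.
have ubarh_ball : `|ubarh| <= alpha^-1.
  apply: Jalpha_le_ball (hdisc_min 0 0 (fin_dim_subspace0 hUh) (fin_dim_subspace0 hYh) _) ball0.
  by move=> wh _; rewrite feas0 subrr (lin_fn0 (linW wh)).
have pair_le u : `|u| <= alpha^-1 -> pUX u (Bs what) <= alpha^-1 * `|Bs what|.
  move=> u_ball; apply: le_trans (ler_wpM2r (normr_ge0 _) u_ball).
  exact: dual_pairing_le_norm_either.
have ip_ze : ip z e = ip r e + (pUX ubar (Bs what) - pUX ubarh (Bs what)).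
  rewrite /z -(lin_fnB linC) !ip_Ce (lin_fnB linA) hcont_feas hAinvr -!hBadj.
  by rewrite /rho !(lin_fnB (linW what)); lra.
have Cybar_gd : C ybar - gd = e - z.
  by rewrite /e /z opprB [RHS]addrC addrA subrK.
have opt : `|e - z| ^+ 2 <= `|e - r| ^+ 2.
  have := hcont_min ubarh (Ainv (B ubarh)) (hAinvr _).
  have -> : B ubarh = A ybarh - rho by rewrite /rho opprB addrC subrK.
  rewrite (lin_fnB linAinv) hAinvl !Jalpha_in_ball // lee_fin (lin_fnB linC) -/r Cybar_gd.
  by rewrite [C ybarh - r - gd]addrAC -/e; lra.
have := closer_point_bounds hG opt ip_ze.
rewrite !Jalpha_in_ball // -EFinB lee_fin -/e Cybar_gd.
have := pair_le _ ubar_ball; have := pair_le _ ubarh_ball.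
have := sqr_ge0 `|r|; nra.
Qed.
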